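(* Let $d$ and $K$ be positive integers, and let $\mathcal P$ be a set consisting either of a single prime or of infinitely many primes. For $k=1,\ldots,K$ let $\{a_{k,n}\}_{n=1}^\infty$ and $\{b_{k,n}\}_{n=1}^\infty$ be sequences of non-zero integers such that $p\nmid\gcd(a_{k,n},b_{k,n})$ for all $p\in\mathcal P$, $k$ and $n$, and such that the partial sums $\alpha_{k,N}=\sum_{n=1}^N\frac{b_{k,n}}{a_{k,n}}$ converge as $N\to\infty$. Set $a_{0,n}=1$. Suppose that for each $k=1,\ldots,K$ and each $p\in\mathcal P$: for every $N\in\mathbb N$ there is exactly one $n\le N$ with $\nu_p(a_{k,n})=\max_{1\le m\le N}\nu_p(a_{k,m})$, and for all sufficiently large $N$, \[\max_{1\le n\le N}\nu_p(a_{k,n})>d\max_{1\le n\le N}\nu_p(a_{k-1,n}).\] If $\mathcal P=\{p\}$, assume additionally that for each $k=1,\ldots,K$, $\lim_{N\to\infty}\big(\max_{1\le n\le N}\nu_p(a_{k,n})-d\max_{1\le n\le N}\nu_p(a_{k-1,n})\big)=\infty$. Let $P\in\mathbb Z[x_1,\ldots,x_K]$ be a non-zero polynomial of degree at most $d$. Then $P(\alpha_{1,N},\ldots,\alpha_{K,N})\ne0$ for all sufficiently large $N$.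
   Context: $\nu_p$ denotes the $p$-adic valuation. *)

From HB Require Import structures.
From mathcomp Require Import all_boot all_order all_algebra.
From mathcomp Require Import mpoly.
From mathcomp Require Import reals Rstruct.
Set Implicit Arguments. Unset Strict Implicit. Unset Printing Implicit Defensive.
Import Order.TTheory GRing.Theory Num.Theory.
Local Open Scope ring_scope.

(* p-adic valuation of an integer (for nonzero z; nu_p 0 = 0 by convention) *)
Definition nu (p : nat) (z : int) : nat := logn p `|z|%N.

Definition maxnu (p : nat) (a : nat -> int) (N : nat) : nat :=
  (\max_(1 <= n < N.+1) nu p (a n))%N.

Definition psum (a b : nat -> int) (N : nat) : rat :=
  \sum_(1 <= n < N.+1) (b n)%:~R / (a n)%:~R.

Definition converges (u : nat -> rat) : Prop :=
  exists l : Rdefinitions.R, forall e : Rdefinitions.R, 0 < e ->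
    exists N0 : nat, forall N : nat, (N0 <= N)%N ->
      `|(ratr (u N) : Rdefinitions.R) - l| < e.

Definition ext0 (a : nat -> nat -> int) (k : nat) : nat -> int :=
  if k == 0%N then (fun _ => 1) else a k.

From HB Require Import structures.
From mathcomp Require Import all_boot all_order all_algebra.
From mathcomp Require Import mpoly.
From mathcomp Require Import reals Rstruct.
From mathcomp Require Import ring zify.
Import Order.TTheory GRing.Theory Num.Theory.
Set Implicit Arguments. Unset Strict Implicit.
Local Open Scope ring_scope.

(* Fix a prime p in the set and put M_k = max_{n <= N} nu_p(a_{k,n}), M_0 = 0.
   Since one term of alpha_{k,N} has strictly the largest denominator valuation
   and p does not divide its numerator, nu_p(alpha_{k,N}) = -M_k.  The monomial
   c_m x^m of P evaluated at alpha_N thus has valuation nu_p(c_m) - sum m_k M_k.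
   As M_k > B + d M_{k-1} and deg P <= d, the weights sum m_k M_k of distinct
   monomials differ by more than B, where B bounds the nu_p(c_m); so the monomial
   of largest weight is the unique term of least valuation and the sum is
   nonzero.  With infinitely many primes, take p larger than every |c_m|, so
   that B = 0; with a single prime, M_k - d M_{k-1} -> oo provides any B. *)

Section PadicValuation.

Variables (p : nat) (p_pr : prime p).

(* Valuations on rat are handled relationally: [pval_ge x e] means
   nu_p(x) >= e and [pval_eq x e] means nu_p(x) = e (so x != 0). *)
Definition pval_ge (x : rat) (e : int) :=
  exists m n : int, ~~ (p%:Z %| n)%Z /\ x = p%:R ^ e * m%:~R / n%:~R.

Definition pval_eq (x : rat) (e : int) :=
  exists m n : int,
    [/\ ~~ (p%:Z %| m)%Z, ~~ (p%:Z %| n)%Z & x = p%:R ^ e * m%:~R / n%:~R].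

Lemma ndvdz1 : ~~ (p%:Z %| 1)%Z.
Proof. by rewrite dvdzE /= dvdn1; apply: contraL (prime_gt1 p_pr) => /eqP ->. Qed.

Lemma ndvdz_intr_neq0 n : ~~ (p%:Z %| n)%Z -> n%:~R != 0 :> rat.
Proof. by apply: contra; rewrite intr_eq0 => /eqP ->; rewrite dvdz0. Qed.

Lemma ndvdzM m n : ~~ (p%:Z %| m)%Z -> ~~ (p%:Z %| n)%Z -> ~~ (p%:Z %| m * n)%Z.
Proof. by rewrite !dvdzE /= abszM Euclid_dvdM // negb_or => -> ->. Qed.

Lemma natp_neq0 : p%:R != 0 :> rat.
Proof. by rewrite pnatr_eq0 -lt0n prime_gt0. Qed.

Lemma pval_eq_neq0 x e : pval_eq x e -> x != 0.
Proof.
move=> [m [n [pm pn ->]]].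
by rewrite !mulf_neq0 ?invr_eq0 ?ndvdz_intr_neq0 ?expfz_neq0 ?natp_neq0.
Qed.

Lemma pval_eq_ge x e : pval_eq x e -> pval_ge x e.
Proof. by move=> [m [n [_ pn ->]]]; exists m, n. Qed.

Lemma pval_ge0 e : pval_ge 0 e.
Proof. by exists 0, 1; rewrite ndvdz1 mulr0 mul0r. Qed.

Lemma pval_ge_int c : pval_ge c%:~R 0.
Proof. by exists c, 1; rewrite ndvdz1 expr0z mul1r divr1. Qed.

Lemma pval_geW x e e' : e' <= e -> pval_ge x e -> pval_ge x e'.
Proof.
move=> le_e [m [n [pn ->]]].
have [k ->] : exists k : nat, e = e' + k%:Z.
  by exists `|e - e'|%N; rewrite gez0_abs ?subr_ge0 // addrCA subrr addr0.
exists (m * (p ^ k)%N%:Z), n; split => //.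
by rewrite expfzDr ?natp_neq0 // rmorphM /= -exprnP -pmulrn natrX; ring.
Qed.

Lemma pval_geD x y e : pval_ge x e -> pval_ge y e -> pval_ge (x + y) e.
Proof.
move=> [m [n [pn ->]]] [m' [n' [pn' ->]]].
exists (m * n' + m' * n), (n * n'); split; first exact: ndvdzM.
have := ndvdz_intr_neq0 pn; have := ndvdz_intr_neq0 pn'.
by rewrite !rmorphD !rmorphM /= => ? ?; field; apply/andP.
Qed.

Lemma pval_geM x y e f : pval_ge x e -> pval_ge y f -> pval_ge (x * y) (e + f).
Proof.
move=> [m [n [pn ->]]] [m' [n' [pn' ->]]].
exists (m * m'), (n * n'); split; first exact: ndvdzM.
have := ndvdz_intr_neq0 pn; have := ndvdz_intr_neq0 pn'.
by rewrite expfzDr ?natp_neq0 // !rmorphM /= => ? ?; field; apply/andP.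
Qed.

Lemma pval_eqM x y e f : pval_eq x e -> pval_eq y f -> pval_eq (x * y) (e + f).
Proof.
move=> [m [n [pm pn ->]]] [m' [n' [pm' pn' ->]]].
exists (m * m'), (n * n'); split; try exact: ndvdzM.
have := ndvdz_intr_neq0 pn; have := ndvdz_intr_neq0 pn'.
by rewrite expfzDr ?natp_neq0 // !rmorphM /= => ? ?; field; apply/andP.
Qed.

Lemma pval_eqV x e : pval_eq x e -> pval_eq x^-1 (- e).
Proof.
move=> [m [n [pm pn ->]]]; exists n, m; split => //.
by rewrite -invr_expz !invfM invrK; ring.
Qed.

Lemma pval_eq1 : pval_eq 1 0.
Proof. by exists 1, 1; rewrite ndvdz1 expr0z mul1r. Qed.

Lemma pval_eq_prod (I : Type) (r : seq I) (F : I -> rat) (v : I -> int) :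
  (forall i, pval_eq (F i) (v i)) ->
  pval_eq (\prod_(i <- r) F i) (\sum_(i <- r) v i).
Proof.
by move=> Fv; apply: (big_ind2 pval_eq pval_eq1) => // *; apply: pval_eqM.
Qed.

Lemma pval_eqX x e k : pval_eq x e -> pval_eq (x ^+ k) (e *+ k).
Proof.
move=> xe; elim: k => [|k IH]; first exact: pval_eq1.
by rewrite exprS mulrS; apply: pval_eqM.
Qed.

Lemma pval_eq_int c : c != 0 -> pval_eq c%:~R (logn p `|c|)%:Z.
Proof.
rewrite -absz_gt0 => c_gt0; have [m pm em] := pfactor_coprime p_pr c_gt0.
have pm' : ~~ (p%:Z %| (-1) ^+ (c < 0)%R * m%:Z)%Z.
  by rewrite dvdzE abszMsign /= -prime_coprime.
exists ((-1) ^+ (c < 0)%R * m%:Z), 1; split => //; first exact: ndvdz1.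
(* Freeze the exponent, so that [em] rewrites only the base [`|c|]. *)
rewrite divr1; set L := logn p _.
by rewrite {1}[c]intEsign em PoszM !rmorphM /= -exprnP -!pmulrn natrX; ring.
Qed.

Lemma pval_ge_sum (I : Type) (r : seq I) (Q : pred I) (F : I -> rat) e :
  (forall i, Q i -> pval_ge (F i) e) -> pval_ge (\sum_(i <- r | Q i) F i) e.
Proof.
move=> Fe; apply: (big_ind (pval_ge^~ e)) => //; first exact: pval_ge0.
move=> x y; apply: pval_geD.
Qed.

Lemma pval_eqD x y e : pval_eq x e -> pval_ge y (e + 1) -> pval_eq (x + y) e.
Proof.
move=> [m [n [pm pn ->]]] [m' [n' [pn' ->]]].
exists (m * n' + p%:Z * m' * n), (n * n'); split; last first.
- have := ndvdz_intr_neq0 pn; have := ndvdz_intr_neq0 pn'.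
  by rewrite expfzDr ?natp_neq0 // expr1z !rmorphD !rmorphM /= => ? ?; field; apply/andP.
- exact: ndvdzM.
- by rewrite rpredDr ?ndvdzM // -mulrA dvdz_mulr.
Qed.

Lemma pval_eq_sum (I : eqType) (r : seq I) i0 (F : I -> rat) e :
  uniq r -> i0 \in r -> pval_eq (F i0) e ->
  (forall i, i \in r -> i != i0 -> pval_ge (F i) (e + 1)) ->
  pval_eq (\sum_(i <- r) F i) e.
Proof.
move=> r_uniq r_i0 F_i0 F_ge; rewrite (bigD1_seq i0) //=.
apply: pval_eqD => //; rewrite big_seq_cond.
by apply: pval_ge_sum => i /andP[]; apply: F_ge.
Qed.

Lemma pval_eq_psum a b N :
  (0 < maxnu p a N)%N ->
  (forall n, (1 <= n <= N)%N -> a n != 0) ->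
  (forall n, (1 <= n <= N)%N -> ~~ (p %| gcdn `|a n| `|b n|)%N) ->
  (exists! n, (1 <= n <= N)%N /\ nu p (a n) = maxnu p a N) ->
  pval_eq (psum a b N) (- (maxnu p a N)%:Z).
Proof.
move=> M_gt0 a_neq0 ab_coprime [n0 [[n0_range n0_max] n0_uniq]].
have a_inv n : (1 <= n <= N)%N -> pval_eq (a n)%:~R^-1 (- (nu p (a n))%:Z).
  by move=> n_range; apply/pval_eqV/pval_eq_int/a_neq0.
have p_b_n0 : ~~ (p %| `|b n0|)%N.
  apply: contra (ab_coprime n0 n0_range) => p_b; rewrite dvdn_gcd p_b andbT.
  by move: M_gt0; rewrite -n0_max logn_gt0 mem_primes => /and3P[].
apply: (pval_eq_sum (i0 := n0)); rewrite ?iota_uniq ?mem_index_iota ?ltnS //.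
  rewrite -n0_max -[- _]add0r; apply: pval_eqM; last exact: a_inv.
  have b_n0 : b n0 != 0 by apply: contraNneq p_b_n0 => ->; rewrite dvdn0.
  by have := pval_eq_int b_n0; rewrite logn_coprime // prime_coprime.
move=> n; rewrite mem_index_iota ltnS => n_range n_neq_n0.
have lt_nu : (nu p (a n) < maxnu p a N)%N.
  rewrite ltn_neqAle; apply/andP; split.
    by apply: contra n_neq_n0 => /eqP nu_max; rewrite -(n0_uniq n (conj n_range nu_max)).
  by apply: (leq_bigmax_seq n); rewrite // mem_index_iota ltnS.
apply: (@pval_geW _ (0 + - (nu p (a n))%:Z)); first lia.
by apply: pval_geM; [exact: pval_ge_int | exact/pval_eq_ge/a_inv].
Qed.

End PadicValuation.

Section LacunaryWeights.

Variables (B d : nat) (M : nat -> nat).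
Hypothesis d_gt0 : (0 < d)%N.

Definition weight k (e : nat -> nat) : nat := \sum_(j < k) e j * M j.+1.

Definition lacunary k := forall j, (j < k)%N -> (B + d * M j < M j.+1)%N.

Lemma lacunary_le k : lacunary k -> forall i, (i <= k)%N -> (M i <= M k)%N.
Proof.
elim: k => [|k IH] lac i; first by rewrite leqn0 => /eqP ->.
rewrite leq_eqVlt ltnS => /predU1P[-> // | le_ik].
have := IH (fun j lt_jk => lac j (leqW lt_jk)) i le_ik.
have := lac k (ltnSn k); have := leq_pmull (M k) d_gt0; lia.
Qed.

Lemma weight_le k (e : nat -> nat) : lacunary k -> (\sum_(j < k) e j <= d)%N ->
  (weight k e <= d * M k)%N.
Proof.
move=> lac deg_e; apply: (@leq_trans (\sum_(j < k) e j * M k)).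
  by apply: leq_sum => j _; rewrite leq_mul2l lacunary_le ?orbT.
by rewrite -big_distrl leq_mul2r deg_e orbT.
Qed.

(* M j.+1 exceeds B plus the largest possible contribution of the coordinates
   below j, so weights compare exponents lexicographically from the top. *)
Lemma weight_separated k (e e' : nat -> nat) : lacunary k ->
  (\sum_(j < k) e j <= d)%N -> (\sum_(j < k) e' j <= d)%N ->
  (exists2 j, (j < k)%N & e j != e' j) ->
  (weight k e + B < weight k e')%N \/ (weight k e' + B < weight k e)%N.
Proof.
elim: k => [|k IH] lac deg_e deg_e' [j lt_jk neq_j] //.
have lac' : lacunary k by move=> i lt_ik; apply/lac/leqW.
move: deg_e deg_e'; rewrite !big_ord_recr /= => deg_e deg_e'.
rewrite /weight !big_ord_recr /= -/(weight k e) -/(weight k e').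
have le_e := weight_le lac' (leq_trans (leq_addr _ _) deg_e).
have le_e' := weight_le lac' (leq_trans (leq_addr _ _) deg_e').
have gap := lac k (ltnSn k).
case: (ltngtP (e k) (e' k)) => cmp_k.
- have : ((e k).+1 * M k.+1 <= e' k * M k.+1)%N by rewrite leq_mul2r cmp_k orbT.
  by rewrite mulSn; lia.
- have : ((e' k).+1 * M k.+1 <= e k * M k.+1)%N by rewrite leq_mul2r cmp_k orbT.
  by rewrite mulSn; lia.
have lt_jk' : (j < k)%N.
  by move: lt_jk neq_j; rewrite ltnS leq_eqVlt => /predU1P[-> | //]; rewrite cmp_k eqxx.
have := IH lac' (leq_trans (leq_addr _ _) deg_e) (leq_trans (leq_addr _ _) deg_e').
by rewrite cmp_k => /(_ (ex_intro2 _ _ j lt_jk' neq_j)) []; lia.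
Qed.

End LacunaryWeights.

Lemma arg_maxn_seq (T : choiceType) (s : seq T) (f : T -> nat) : s != [::] ->
  exists2 x, x \in s & {in s, forall y, (f y <= f x)%N}.
Proof.
case: s => // x0 s _.
have [i _ max_i] := @arg_maxnP _ (SeqSub (mem_head x0 s)) xpredT (f \o val) isT.
by exists (val i); [exact: valP | move=> y s_y; apply: (max_i (SeqSub s_y))].
Qed.

Definition mnm_fun K (m : 'X_{1..K}) (j : nat) : nat :=
  if insub j is Some i then m i else 0%N.

Lemma mnm_funE K (m : 'X_{1..K}) (i : 'I_K) : mnm_fun m i = m i.
Proof. by rewrite /mnm_fun valK. Qed.

Lemma mnm_fun_sum K (m : 'X_{1..K}) : (\sum_(j < K) mnm_fun m j)%N = mdeg m.
Proof. by rewrite mdegE; apply: eq_bigr => i _; rewrite mnm_funE. Qed.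

Lemma mnm_fun_neq K (m m' : 'X_{1..K}) : m != m' ->
  exists2 j, (j < K)%N & mnm_fun m j != mnm_fun m' j.
Proof.
move=> neq_m; have /existsP[i neq_i] : [exists i : 'I_K, m i != m' i].
  by apply: contraR neq_m => /existsPn eq_i; apply/eqP/mnmP => i; apply/eqP/negPn.
by exists i; rewrite ?mnm_funE.
Qed.

Lemma meval_lacunary_neq0 K (P : {mpoly int[K]}) (x : 'I_K -> rat) p B d M :
  prime p -> (0 < d)%N -> P != 0 -> (msize P <= d.+1)%N ->
  (forall m, m \in msupp P -> (logn p `|P@_m| <= B)%N) ->
  lacunary B d M K ->
  (forall i : 'I_K, pval_eq p (x i) (- (M i.+1)%:Z)) ->
  (map_mpoly intr P).@[x] != 0.
Proof.
move=> p_pr d_gt0 P_neq0 size_P coef_B lac x_val.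
pose S (m : 'X_{1..K}) := weight M K (mnm_fun m).
have term_val m : m \in msupp P ->
    pval_eq p ((P@_m)%:~R * \prod_i x i ^+ m i) ((logn p `|P@_m|)%:Z - (S m)%:Z).
  move=> supp_m; apply: pval_eqM => //; first by apply: pval_eq_int; rewrite -?mcoeff_msupp.
  have := pval_eq_prod p_pr (index_enum 'I_K) (fun i => pval_eqX p_pr (m i) (x_val i)).
  congr pval_eq; rewrite /S /weight -natz natr_sum -sumrN; apply: eq_bigr => i _.
  by rewrite mnm_funE mulNrn natrM mulr_natl natz.
have deg_le m : m \in msupp P -> (\sum_(j < K) mnm_fun m j <= d)%N.
  by move=> supp_m; rewrite mnm_fun_sum -ltnS (leq_trans (msize_mdeg_lt supp_m)).
have [ms supp_ms ms_max] :
    exists2 ms, ms \in msupp P & {in msupp P, forall m, (S m <= S ms)%N}.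
  by apply: arg_maxn_seq; rewrite msupp_eq0.
have sep m : m \in msupp P -> m != ms -> (S m + B < S ms)%N.
  move=> supp_m /mnm_fun_neq neq_m.
  have := weight_separated d_gt0 lac (deg_le m supp_m) (deg_le ms supp_ms) neq_m.
  by have := ms_max m supp_m; rewrite /S; lia.
rewrite mevalE (perm_big _ (msupp_map_mpoly _ intr_inj)) /=.
under eq_bigr do rewrite mcoeff_map_mpoly.
apply: (pval_eq_neq0 p_pr); apply: (pval_eq_sum p_pr (i0 := ms)) => //.
  exact: term_val.
move=> m supp_m neq_m; apply: (pval_geW p_pr _ (pval_eq_ge (term_val m supp_m))).
by have := coef_B _ supp_ms; have := sep m supp_m neq_m; lia.
Qed.

Lemma eventually_forall_lt K (Q : nat -> nat -> Prop) :
  (forall k, (k < K)%N -> exists N0, forall N, (N0 <= N)%N -> Q k N) ->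
  exists N0, forall N, (N0 <= N)%N -> forall k, (k < K)%N -> Q k N.
Proof.
elim: K => [|K IH] ev_Q; first by exists 0%N.
have [N1 Q_N1] := IH (fun k lt_kK => ev_Q k (leqW lt_kK)).
have [N2 Q_N2] := ev_Q K (ltnSn K).
exists (maxn N1 N2) => N; rewrite geq_max => /andP[le_N1 le_N2] k.
by rewrite ltnS leq_eqVlt => /predU1P[-> | lt_kK]; [exact: Q_N2 | exact: Q_N1].
Qed.

Lemma meval_psum_eventually_neq0 d K (P : {mpoly int[K]}) (a b : nat -> nat -> int) p B :
  prime p -> (0 < d)%N -> P != 0 -> (msize P <= d.+1)%N ->
  (forall m, m \in msupp P -> (logn p `|P@_m| <= B)%N) ->
  (forall k n, (1 <= k <= K)%N -> (1 <= n)%N -> a k n != 0) ->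
  (forall k n, (1 <= k <= K)%N -> (1 <= n)%N -> ~~ (p %| gcdn `|a k n| `|b k n|)%N) ->
  (forall k N, (1 <= k <= K)%N -> (1 <= N)%N ->
      exists! n : nat, (1 <= n <= N)%N /\ nu p (a k n) = maxnu p (a k) N) ->
  (forall k, (1 <= k <= K)%N -> exists N0, forall N, (N0 <= N)%N ->
      (B + d * maxnu p (ext0 a k.-1) N < maxnu p (a k) N)%N) ->
  exists N0, forall N, (N0 <= N)%N ->
    (map_mpoly intr P).@[fun i : 'I_K => psum (a i.+1) (b i.+1) N] != 0 :> rat.
Proof.
move=> p_pr d_gt0 P_neq0 size_P coef_B a_neq0 ab_coprime max_uniq gap.
have [N0 lac] := eventually_forall_lt (fun j lt_jK => gap j.+1 lt_jK).
exists (maxn N0 1) => N; rewrite geq_max => /andP[le_N0 N_gt0].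
apply: (meval_lacunary_neq0 (B := B) (M := fun j => maxnu p (ext0 a j) N) p_pr d_gt0) => //.
  exact: lac N le_N0.
move=> i; have i_range : (1 <= i.+1 <= K)%N by rewrite ltn_ord.
apply: pval_eq_psum => //.
- by have := lac N le_N0 i (ltn_ord i); lia.
- by move=> n /andP[n_gt0 _]; apply: a_neq0.
- by move=> n /andP[n_gt0 _]; apply: ab_coprime.
- exact: max_uniq.
Qed.

Theorem lemma9
  (d K : nat) (Pset : nat -> Prop) (a b : nat -> nat -> int)
  (P : {mpoly int[K]})
  (hd : (0 < d)%N) (hK : (0 < K)%N)
  (hPprime : forall p, Pset p -> prime p)
  (hPshape : (exists p, forall q, Pset q <-> q = p) \/
             (forall m : nat, exists p, (m < p)%N /\ Pset p))
  (ha0 : forall k n, (1 <= k <= K)%N -> (1 <= n)%N -> a k n != 0)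
  (hb0 : forall k n, (1 <= k <= K)%N -> (1 <= n)%N -> b k n != 0)
  (hgcd : forall p k n, Pset p -> (1 <= k <= K)%N -> (1 <= n)%N ->
            ~~ (p %| gcdn `|a k n| `|b k n|)%N)
  (hconv : forall k, (1 <= k <= K)%N -> converges (psum (a k) (b k)))
  (huniq : forall p k N, Pset p -> (1 <= k <= K)%N -> (1 <= N)%N ->
      exists! n : nat, (1 <= n <= N)%N /\ nu p (a k n) = maxnu p (a k) N)
  (hgrow : forall p k, Pset p -> (1 <= k <= K)%N ->
      exists N0 : nat, forall N : nat, (N0 <= N)%N ->
        (d * maxnu p (ext0 a k.-1) N < maxnu p (a k) N)%N)
  (hsingle : forall p, (forall q, Pset q <-> q = p) ->
      forall k, (1 <= k <= K)%N -> forall B : nat,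
        exists N0 : nat, forall N : nat, (N0 <= N)%N ->
          (B + d * maxnu p (ext0 a k.-1) N < maxnu p (a k) N)%N)
  (hP0 : P != 0) (hPdeg : (msize P <= d.+1)%N) :
  exists N0 : nat, forall N : nat, (N0 <= N)%N ->
    (map_mpoly intr P).@[fun i : 'I_K => psum (a i.+1) (b i.+1) N] != 0 :> rat.
Proof.
case: hPshape => [[p Pset_p] | Pset_unbounded].
  have p_in : Pset p by apply/Pset_p.
  pose B := (\max_(m <- msupp P) logn p `|P@_m|)%N.
  apply: (@meval_psum_eventually_neq0 d K P a b p B) => //.
  - exact: hPprime.
  - by move=> m supp_m; apply: (leq_bigmax_seq m).
  - by move=> k n; apply: hgcd.
  - by move=> k N; apply: huniq.
  - by move=> k k_range; apply: hsingle.
pose C := (\max_(m <- msupp P) `|P@_m|)%N.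
have [p [lt_C_p p_in]] := Pset_unbounded C.
apply: (@meval_psum_eventually_neq0 d K P a b p 0) => //.
- exact: hPprime.
- move=> m supp_m; rewrite leqn0; apply/eqP/logn_coprime.
  rewrite prime_coprime ?hPprime //; apply: contraL lt_C_p => /dvdn_leq p_le.
  rewrite -leqNgt (leq_trans (p_le _)) ?absz_gt0 -?mcoeff_msupp //.
  exact: (leq_bigmax_seq m).
- by move=> k n; apply: hgcd.
- by move=> k N; apply: huniq.
- by move=> k k_range; apply: hgrow.
Qed.
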